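(* Let $R$ be an integral domain, $Q$ a prime ideal of $R[X]$, and $p = Q\cap R$. If $p^t$ is $p$-primary (equivalently $p^t = p^{(t)} = p^tR_p\cap R$) for all $t\geq 1$, then $Q$ is power stable.
   Context: An ideal $I$ of the polynomial ring $R[X]$ over an integral domain $R$ is called power stable if $I^t\cap R = (I\cap R)^t$ for all integers $t\geq 1$. *)

From HB Require Import structures.
From mathcomp Require Import all_boot all_order all_algebra.
Set Implicit Arguments. Unset Strict Implicit. Unset Printing Implicit Defensive.
Import GRing.Theory.
Local Open Scope ring_scope.

Section Ideals.
Variable A : comRingType.

Definition is_ideal (I : A -> Prop) : Prop :=
  [/\ I 0,
      (forall x y, I x -> I y -> I (x + y)) &
      (forall r x, I x -> I (r * x))].

Definition prime_ideal (I : A -> Prop) : Prop :=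
  [/\ is_ideal I, ~ I 1 &
      (forall a b, I (a * b) -> I a \/ I b)].

Definition ideal_mul (I J : A -> Prop) : A -> Prop :=
  fun z => exists s : seq (A * A),
    (forall p, p \in s -> I p.1 /\ J p.2) /\ z = \sum_(p <- s) p.1 * p.2.

Fixpoint ideal_pow (I : A -> Prop) (t : nat) : A -> Prop :=
  match t with
  | 0%N => fun _ => True
  | t'.+1 => ideal_mul (ideal_pow I t') I
  end.

Definition ideal_rad (I : A -> Prop) : A -> Prop :=
  fun x => exists n : nat, I (x ^+ n).

Definition primary_ideal (q : A -> Prop) : Prop :=
  [/\ is_ideal q, ~ q 1 &
      (forall a b, q (a * b) -> ~ q a -> ideal_rad q b)].

Definition P_primary (q P : A -> Prop) : Prop :=
  primary_ideal q /\ (forall x, ideal_rad q x <-> P x).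

End Ideals.

Definition contract (R : idomainType) (I : {poly R} -> Prop) : R -> Prop :=
  fun r => I r%:P.

Definition power_stable (R : idomainType) (I : {poly R} -> Prop) : Prop :=
  forall t : nat, (1 <= t)%N ->
    forall r : R, contract (ideal_pow I t) r <-> ideal_pow (contract I) t r.

From HB Require Import structures.
From mathcomp Require Import all_boot all_order all_algebra.
From mathcomp Require Import ring.
From Stdlib Require Import Classical.
Set Implicit Arguments. Unset Strict Implicit. Unset Printing Implicit Defensive.
Import GRing.Theory Pdiv.Ring Pdiv.ComRing.
Local Open Scope ring_scope.

(* The inclusion (Q ∩ R)^t ⊆ Q^t ∩ R is immediate.  For the converse, pick
   g ∈ Q of minimal degree among the elements of Q having a coefficient
   outside p (or g = X if there is none), and let s be its leading
   coefficient.  Minimality forces s ∉ p and, by pseudo-division by g, every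
   h ∈ Q satisfies  s^N h ∈ p[X] + g R[X]  for some N.  This "saturation"
   condition is multiplicative, so every h ∈ Q^t satisfies
   s^N h ∈ p^t[X] + g R[X].  For a constant h = a, pseudo-dividing the
   p^t[X]-part by g and comparing degrees gives s^M a ∈ p^t; since s is not
   in p, the radical of the primary ideal p^t, this yields a ∈ p^t. *)

Section IdealProducts.
Variable A : comNzRingType.
Implicit Types (I J : A -> Prop) (x y : A).

Lemma ideal_mul0 I J : ideal_mul I J 0.
Proof. by exists [::]; rewrite big_nil. Qed.

Lemma ideal_mulD I J x y :
  ideal_mul I J x -> ideal_mul I J y -> ideal_mul I J (x + y).
Proof.
move=> [s1 [I1 ->]] [s2 [I2 ->]]; exists (s1 ++ s2); rewrite big_cat; split=> //.
by move=> q; rewrite mem_cat => /orP[/I1|/I2].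
Qed.

Lemma ideal_mul_prod I J x y : I x -> J y -> ideal_mul I J (x * y).
Proof.
move=> Ix Jy; exists [:: (x, y)]; rewrite big_seq1; split=> // q.
by rewrite inE => /eqP ->.
Qed.

Lemma ideal_mulM I J r x : is_ideal I -> ideal_mul I J x -> ideal_mul I J (r * x).
Proof.
move=> [_ _ IM] [s [Is ->]]; exists [seq (r * q.1, q.2) | q <- s]; split.
  by move=> q /mapP [q' /Is [I1 J2] ->]; split=> //; apply: IM.
by rewrite big_map mulr_sumr; apply: eq_bigr => q _; rewrite mulrA.
Qed.

Lemma ideal_pow_is_ideal I t : is_ideal (ideal_pow I t).
Proof.
elim: t => [|t IH] /=; first by split.
split=> [|x y|r x]; [exact: ideal_mul0 | exact: ideal_mulD | exact: ideal_mulM].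
Qed.

Definition coefs_in I (c : {poly A}) : Prop := forall i, I c`_i.

Lemma coefs_in_mul I J c d :
  coefs_in I c -> coefs_in J d -> coefs_in (ideal_mul I J) (c * d).
Proof.
move=> Ic Jd k; rewrite coefM; apply: big_ind => [|x y|i _].
- exact: ideal_mul0.
- exact: ideal_mulD.
- exact: ideal_mul_prod.
Qed.

(* Each step of pseudo-division replaces r by  lc(d) r - lc(r) X^k d,  which
   stays in I[X]; hence the pseudo-remainder of an element of I[X] is in I[X]. *)
Lemma coefs_in_rmodp I c d : is_ideal I -> coefs_in I c -> coefs_in I (rmodp c d).
Proof.
move=> [I0 ID IM] Ic; rewrite /rmodp unlock /redivp_expanded_def.
case: eqP => _ //=.
have IN x : I x -> I (- x) by move=> Ix; rewrite -mulN1r; apply: IM.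
have step r k : coefs_in I r ->
    coefs_in I (r * (lead_coef d)%:P - lead_coef r *: 'X^k * d).
  move=> Ir i; rewrite coefB coefMC -scalerAl coefZ.
  apply: ID; last apply: IN; rewrite mulrC; apply: IM => //.
  by rewrite lead_coefE.
move: (size c) => n; elim: n 0%N 0 c Ic => [|n IH] k q r Ir /=; case: ifP => // _.
  exact: step.
exact/IH/step.
Qed.

Lemma primary_cancel (q P : A -> Prop) s m a :
  P_primary q P -> ~ P s -> q (s ^+ m * a) -> q a.
Proof.
move=> [[_ _ qprimary] radq] Ps qsa; apply: NNPP => qa; apply: Ps.
have [n qsmn] : ideal_rad q (s ^+ m) by apply: qprimary qa; rewrite mulrC.
by apply/radq; exists (m * n)%N; rewrite exprM.
Qed.

End IdealProducts.

Section Saturation.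
Variable R : idomainType.
Implicit Types (g h c : {poly R}) (I J K : R -> Prop).

(* h lies in the saturation (J[X] + g R[X]) : s^∞, where s = lead_coef g. *)
Definition in_saturation g J h : Prop :=
  exists N H c, lead_coef g ^+ N *: h = c + g * H /\ coefs_in J c.

Lemma saturation_add g J h1 h2 : is_ideal J ->
  in_saturation g J h1 -> in_saturation g J h2 -> in_saturation g J (h1 + h2).
Proof.
move=> [J0 JD JM] [N1 [H1 [c1 [e1 Jc1]]]] [N2 [H2 [c2 [e2 Jc2]]]].
set s := lead_coef g in e1 e2 *.
exists (N1 + N2)%N, (s ^+ N2 *: H1 + s ^+ N1 *: H2), (s ^+ N2 *: c1 + s ^+ N1 *: c2).
split; last by move=> i; rewrite coefD !coefZ; apply: JD; apply: JM.
rewrite scalerDr {1}addnC !exprD -!scalerA e1 e2 !scalerDr mulrDr -!scalerAr.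
by rewrite addrACA.
Qed.

Lemma saturation_mul g J K h1 h2 :
  in_saturation g J h1 -> in_saturation g K h2 ->
  in_saturation g (ideal_mul J K) (h1 * h2).
Proof.
move=> [N1 [H1 [c1 [e1 Jc1]]]] [N2 [H2 [c2 [e2 Kc2]]]].
exists (N1 + N2)%N, (c1 * H2 + H1 * (c2 + g * H2)), (c1 * c2).
split; last exact: coefs_in_mul.
by rewrite exprD -scalerA scalerAr e2 scalerAl e1; ring.
Qed.

Lemma saturation_pow (Q : {poly R} -> Prop) g I :
  (forall h, Q h -> in_saturation g I h) ->
  forall t h, ideal_pow Q t h -> in_saturation g (ideal_pow I t) h.
Proof.
move=> QI; elim=> [|t IH] h /=.
  by move=> _; exists 0%N, 0, h; rewrite scale1r mulr0 addr0.
move=> [l [Ql ->]]; rewrite big_seq; apply: big_ind => [|h1 h2|q /Ql [Qq1 Qq2]].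
- exists 0%N, 0, 0; rewrite scaler0 mulr0 addr0; split=> // i.
  by rewrite coef0; apply: ideal_mul0.
- exact/saturation_add/(ideal_pow_is_ideal _ t.+1).
- exact: saturation_mul (IH _ Qq1) (QI _ Qq2).
Qed.

(* A constant in the saturation of J[X] + g R[X], with deg g >= 1, becomes
   an element of J after multiplication by a power of lead_coef g: pseudo-divide
   the J[X]-part by g and compare degrees. *)
Lemma saturation_const g J a : is_ideal J -> (1 < size g)%N ->
  in_saturation g J a%:P -> exists m, J (lead_coef g ^+ m * a).
Proof.
move=> HJ g1 [N [H [c [e Jc]]]]; set s := lead_coef g in e *.
set k := rscalp c g; set r := rmodp c g.
have gnz : g != 0 by rewrite -size_poly_gt0 ltnW.
exists (k + N)%N.
set Y := rdivp c g + s ^+ k *: H.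
have eY : (s ^+ (k + N) * a)%:P - r = g * Y.
  rewrite -scale_polyC exprD -scalerA e scalerDr rdivp_eq /Y mulrDr -scalerAr.
  by rewrite mulrC addrAC addrK.
have Y0 : Y = 0.
  apply/eqP; apply: contraT => Ynz.
  have : (size (g * Y)%R < size g)%N.
    rewrite -eY; apply: (leq_ltn_trans (size_polyD _ _)).
    rewrite size_polyN gtn_max ltn_rmodpN0 // andbT.
    exact: (leq_ltn_trans (size_polyC_leq1 _) g1).
  rewrite size_mul //; rewrite -size_poly_gt0 in Ynz; case: (size Y) Ynz => // n _.
  by rewrite addnS /= ltnNge leq_addr.
move/eqP: eY; rewrite Y0 mulr0 subr_eq0 => /eqP sa.
by have := coefs_in_rmodp g HJ Jc 0; rewrite -/r -sa coefC.
Qed.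

End Saturation.

(* Well-ordering of nat, for a Prop-valued (undecidable) predicate. *)
Lemma exists_minimal (P : nat -> Prop) n : P n ->
  exists m, P m /\ forall k, (k < m)%N -> ~ P k.
Proof.
elim/ltn_ind: n => n IH Pn.
case: (classic (exists k, (k < n)%N /\ P k)) => [[k [kn Pk]]|noP].
  exact: IH kn Pk.
by exists n; split=> // k kn Pk; apply: noP; exists k.
Qed.

Section Contraction.
Variable R : idomainType.
Variable Q : {poly R} -> Prop.
Hypothesis Qideal : is_ideal Q.
Hypothesis Qproper : ~ Q 1.

Local Notation p := (contract Q).

Lemma contract_is_ideal : is_ideal p.
Proof.
have [Q0 QD QM] := Qideal; rewrite /contract.
split=> [|x y Qx Qy|r x Qx]; first by rewrite polyC0.
  by rewrite polyCD; apply: QD.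
by rewrite polyCM; apply: QM.
Qed.

Lemma minimal_generator : (exists h, Q h /\ ~ coefs_in p h) ->
  exists g, [/\ Q g, ~ coefs_in p g &
    forall h, Q h -> (size h < size g)%N -> coefs_in p h].
Proof.
move=> [h0 [Qh0 h0p]].
have [n [[g [Qg gp <-]] gmin]] :=
  @exists_minimal (fun n => exists h, [/\ Q h, ~ coefs_in p h & size h = n])
    (size h0) (ex_intro _ h0 (And3 Qh0 h0p erefl)).
exists g; split=> // h Qh hg; apply: NNPP => hp.
by apply: gmin hg _; exists h.
Qed.

Section MinimalGenerator.
Variable g : {poly R}.
Hypotheses (Qg : Q g) (gp : ~ coefs_in p g).
Hypothesis gmin : forall h, Q h -> (size h < size g)%N -> coefs_in p h.

(* Otherwise removing the leading term of g would give a smaller counterexample. *)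
Lemma minimal_lead_coef : ~ p (lead_coef g).
Proof.
have [Q0 QD QM] := Qideal; move=> ps.
have gnz : g != 0.
  by apply/eqP => g0; apply: gp; rewrite g0 => i; rewrite coef0 /contract polyC0.
set d := (size g).-1.
have sg : size g = d.+1 by rewrite prednK // size_poly_gt0.
set g' := g - (lead_coef g)%:P * 'X^d.
have Qg' : Q g' by apply: QD => //; rewrite mulrC -mulNr; apply: QM.
have cg' j : g'`_j = g`_j - lead_coef g * (j == d)%:R.
  by rewrite coefB coefCM coefXn.
have g'g : (size g' < size g)%N.
  rewrite sg ltnS; apply/leq_sizeP => j; rewrite leq_eqVlt => /orP[/eqP <-|dj].
    by rewrite cg' eqxx mulr1 -lead_coefE subrr.
  by rewrite cg' (gtn_eqF dj) mulr0 subr0 nth_default // sg.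
apply: gp => i; have [->|id] := eqVneq i d; first by rewrite -lead_coefE.
by have := gmin Qg' g'g i; rewrite cg' (negPf id) mulr0 subr0.
Qed.

Lemma minimal_size : (1 < size g)%N.
Proof.
rewrite ltnNge; apply/negP => g1; apply: gp => i.
have gC := size1_polyC g1.
case: i => [|i]; first by rewrite /contract -gC.
have [p0 _ _] := contract_is_ideal.
by rewrite nth_default //; apply: leq_trans g1 _.
Qed.

(* Pseudo-division by g: s^k h = q g + r with r ∈ Q of smaller degree, so r ∈ p[X]. *)
Lemma minimal_saturation h : Q h -> in_saturation g p h.
Proof.
have [Q0 QD QM] := Qideal; move=> Qh.
have gnz : g != 0 by rewrite -size_poly_gt0 ltnW // minimal_size.
exists (rscalp h g), (rdivp h g), (rmodp h g); split.
  by rewrite rdivp_eq addrC mulrC.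
apply: gmin (ltn_rmodpN0 _ gnz).
have -> : rmodp h g = lead_coef g ^+ rscalp h g *: h - rdivp h g * g.
  by rewrite rdivp_eq addrC addKr.
by apply: QD; [rewrite -mul_polyC | rewrite -mulNr]; apply: QM.
Qed.

End MinimalGenerator.

Lemma saturating_generator : exists g : {poly R}, [/\ (1 < size g)%N, ~ p (lead_coef g) &
  forall h, Q h -> in_saturation g p h].
Proof.
case: (classic (exists h, Q h /\ ~ coefs_in p h)) => [Qnp|Qp].
  have [g [Qg gp gmin]] := minimal_generator Qnp.
  exists g; split; [exact: minimal_size | exact: minimal_lead_coef | exact: minimal_saturation].
exists 'X; rewrite size_polyX lead_coefX /contract polyC1; split=> // h Qh.
exists 0%N, 0, h; rewrite scale1r mulr0 addr0; split=> //.
by apply: NNPP => hp; apply: Qp; exists h.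
Qed.

End Contraction.

Lemma contract_pow (R : idomainType) (Q : {poly R} -> Prop) t r :
  ideal_pow (contract Q) t r -> ideal_pow Q t r%:P.
Proof.
elim: t r => [|t IH] r //= [l [Ql ->]].
exists [seq (q.1%:P, q.2%:P) | q <- l]; split.
  by move=> q /mapP [q' /Ql [Q1 Q2] ->]; split=> //; apply: IH.
by rewrite big_map rmorph_sum; apply: eq_bigr => q _; rewrite rmorphM.
Qed.

Theorem mainTheorem13 (R : idomainType) (Q : {poly R} -> Prop) :
  prime_ideal Q ->
  (forall t : nat, (1 <= t)%N -> P_primary (ideal_pow (contract Q) t) (contract Q)) ->
  power_stable Q.
Proof.
move=> [Qideal Qproper _] primary t t1 a; split; last exact: contract_pow.
move=> Qta.
have [g [g1 lead_notin Qsat]] := saturating_generator Qideal Qproper.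
have [m Jsa] := saturation_const (ideal_pow_is_ideal _ t) g1 (saturation_pow Qsat Qta).
exact: primary_cancel (primary t t1) lead_notin Jsa.
Qed.
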